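(* On $\mathbb{C}^2\otimes\mathbb{C}^2$ let $|\Phi^\pm\rangle=(|00\rangle\pm|11\rangle)/\sqrt2$, and for $\alpha,\beta\in(0,1)$ let $\sigma_1=\alpha|\Phi^+\rangle\langle\Phi^+|+(1-\alpha)|01\rangle\langle01|$ and $\sigma_2=\beta|\Phi^-\rangle\langle\Phi^-|+(1-\beta)|10\rangle\langle10|$, with supports $s_1=\mathrm{span}\{|\Phi^+\rangle,|01\rangle\}$ and $s_2=\mathrm{span}\{|\Phi^-\rangle,|10\rangle\}$. Then any two unit vectors $|\psi_1\rangle\in s_1$, $|\psi_2\rangle\in s_2$ are perfectly distinguishable by LOCC, but $\{\sigma_1,\sigma_2\}$ is not perfectly distinguishable by LOCC (indeed not even by any separable POVM).
   Context: The two parties hold the two qubits. A set of states is perfectly distinguishable by LOCC if there is an LOCC protocol identifying the state with probability $1$; equivalently there is an LOCC-implementable POVM $\{\Pi_i\}$ with $\mathrm{Tr}(\Pi_i\sigma_j)=\delta_{ij}$. A separable POVM is one whose elements are nonnegative combinations of tensor products of positive semidefinite operators on the two qubits. The support of a density matrix is the span of its eigenvectors with nonzero eigenvalues. *)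

(* Two-qubit quantum states over an arbitrary
   numClosedFieldType C (the complex numbers being the intended model). *)
From HB Require Import structures.
From mathcomp Require Import all_boot all_order all_algebra.
Set Implicit Arguments. Unset Strict Implicit. Unset Printing Implicit Defensive.
Import Order.TTheory GRing.Theory Num.Theory.
Local Open Scope ring_scope.

Definition adj (C : numClosedFieldType) m n (A : 'M[C]_(m, n)) : 'M[C]_(n, m) :=
  (map_mx Num.conj A)^T.

Definition psd (C : numClosedFieldType) n (A : 'M[C]_n) : Prop :=
  adj A = A /\ forall v : 'cV[C]_n, 0 <= (adj v *m A *m v) 0 0.

Definition kron (C : numClosedFieldType) m1 n1 m2 n2
  (A : 'M[C]_(m1, n1)) (B : 'M[C]_(m2, n2)) : 'M[C]_(m1 * m2, n1 * n2) :=
  \sum_(i < m1) \sum_(j < n1) \sum_(k < m2) \sum_(l < n2)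
     (A i j * B k l) *: delta_mx (mxvec_index i k) (mxvec_index j l).

Definition ket (C : numClosedFieldType) (a b : 'I_2) : 'cV[C]_(2 * 2) :=
  delta_mx (mxvec_index a b) 0.

Definition q0 : 'I_2 := ord0.
Definition q1 : 'I_2 := ord_max.

Definition PhiP (C : numClosedFieldType) : 'cV[C]_(2 * 2) :=
  (sqrtC (2 : C))^-1 *: (ket C q0 q0 + ket C q1 q1).
Definition PhiM (C : numClosedFieldType) : 'cV[C]_(2 * 2) :=
  (sqrtC (2 : C))^-1 *: (ket C q0 q0 - ket C q1 q1).

Definition proj (C : numClosedFieldType) n (v : 'cV[C]_n) : 'M[C]_n := v *m adj v.

Definition unit_vec (C : numClosedFieldType) n (v : 'cV[C]_n) : Prop :=
  (adj v *m v) 0 0 = 1.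

Definition in_span2 (C : numClosedFieldType) n (u w v : 'cV[C]_n) : Prop :=
  exists a b : C, v = a *: u + b *: w.

Definition sigma1 (C : numClosedFieldType) (alpha : C) : 'M[C]_(2 * 2) :=
  alpha *: proj (PhiP C) + (1 - alpha) *: proj (ket C q0 q1).
Definition sigma2 (C : numClosedFieldType) (beta : C) : 'M[C]_(2 * 2) :=
  beta *: proj (PhiM C) + (1 - beta) *: proj (ket C q1 q0).

Definition pair2 (T : Type) (x y : T) : 'I_2 -> T :=
  fun i => if val i == 0%N then x else y.

Definition sep_op (C : numClosedFieldType) (M : 'M[C]_(2 * 2)) : Prop :=
  exists (N : nat) (A B : 'I_N -> 'M[C]_2),
    (forall r, psd (A r) /\ psd (B r)) /\ M = \sum_(r < N) kron (A r) (B r).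

Definition sep_perfect (C : numClosedFieldType) k (rho : 'I_k -> 'M[C]_(2 * 2)) : Prop :=
  exists Pi : 'I_k -> 'M[C]_(2 * 2),
    (\sum_(i < k) Pi i = 1%:M) /\ (forall i, sep_op (Pi i)) /\
    (forall i j, \tr (Pi i *m rho j) = (i == j)%:R).

(* ---------- (finite-round) LOCC protocols ----------
   A protocol is a finite tree: at each node Alice (resp. Bob) performs a
   local measurement with Kraus operators K_0..K_{m-1} on her (his) qubit,
   the outcome is broadcast, and the protocol continues; leaves announce
   the guess in 'I_k. *)
Inductive locc_tree (C : Type) (k : nat) : Type :=
| LLeaf : 'I_k -> locc_tree C k
| LAlice (m : nat) : ('I_m -> 'M[C]_2) -> ('I_m -> locc_tree C k) -> locc_tree C k
| LBob (m : nat) : ('I_m -> 'M[C]_2) -> ('I_m -> locc_tree C k) -> locc_tree C k.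

Fixpoint locc_wf (C : numClosedFieldType) k (t : locc_tree C k) : Prop :=
  match t with
  | LLeaf _ => True
  | LAlice m K nx => \sum_(j < m) adj (K j) *m K j = 1%:M /\ forall j, locc_wf (nx j)
  | LBob m K nx => \sum_(j < m) adj (K j) *m K j = 1%:M /\ forall j, locc_wf (nx j)
  end.

(* POVM element of outcome i implemented by the protocol *)
Fixpoint locc_effect (C : numClosedFieldType) k (t : locc_tree C k) (i : 'I_k)
  : 'M[C]_(2 * 2) :=
  match t with
  | LLeaf l => if l == i then 1%:M else 0
  | LAlice m K nx => \sum_(j < m)
      adj (kron (K j) (1%:M : 'M[C]_2)) *m locc_effect (nx j) i *m kron (K j) (1%:M : 'M[C]_2)
  | LBob m K nx => \sum_(j < m)
      adj (kron (1%:M : 'M[C]_2) (K j)) *m locc_effect (nx j) i *m kron (1%:M : 'M[C]_2) (K j)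
  end.

Definition locc_perfect (C : numClosedFieldType) k (rho : 'I_k -> 'M[C]_(2 * 2)) : Prop :=
  exists t : locc_tree C k, locc_wf t /\
    forall i j, \tr (locc_effect t i *m rho j) = (i == j)%:R.

(* If Alice
   measures in an orthonormal basis (w, w'), Bob's conditional states for psi1
   and psi2 have an overlap that, as a function of Alice's vector, is a
   traceless triangular form; a unit isotropic vector w of it gives a basis
   (w, perp w) of isotropic vectors, after which Bob's two conditional states
   are orthogonal and a suitable basis of Bob's qubit separates them.

   Part (ii)-(iii): effects of LOCC protocols are separable, so it suffices to
   rule out separable POVMs. A positive product operator A (x) B annihilating
   sigma1 or sigma2 has zero weight on |00><00| (a 2x2 positivity argument on
   the Bell-state expectation); hence both POVM elements vanish at that entry,
   contradicting that they sum to the identity. *)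
From HB Require Import structures.
From mathcomp Require Import all_boot all_order all_algebra.
From mathcomp Require Import ring.
Set Implicit Arguments. Unset Strict Implicit. Unset Printing Implicit Defensive.
Import Order.TTheory GRing.Theory Num.Theory.
Local Open Scope ring_scope.

Section AdjointKronecker.
Variable C : numClosedFieldType.

Lemma conjCD (x y : C) : (x + y)^* = x^* + y^*. Proof. exact: rmorphD. Qed.
Lemma conjCN (x : C) : (- x)^* = - x^*. Proof. exact: rmorphN. Qed.
Lemma conjCM (x y : C) : (x * y)^* = x^* * y^*. Proof. exact: rmorphM. Qed.

Lemma mxvec_index_eq m n (i i' : 'I_m) (j j' : 'I_n) :
  (mxvec_index i j == mxvec_index i' j') = (i == i') && (j == j').
Proof.
by rewrite /mxvec_index (inj_eq (@cast_ord_inj _ _ _)) (inj_eq enum_rank_inj) xpair_eqE.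
Qed.

Lemma sum_mxvec m n (F : 'I_(m * n) -> C) :
  \sum_(r < m * n) F r = \sum_(a < m) \sum_(b < n) F (mxvec_index a b).
Proof.
rewrite (reindex _ (curry_mxvec_bij _ _)) /= pair_bigA /=.
by apply: eq_bigr => [[a b]].
Qed.

Lemma kronE m1 n1 m2 n2 (A : 'M[C]_(m1, n1)) (B : 'M[C]_(m2, n2)) i j k l :
  kron A B (mxvec_index i k) (mxvec_index j l) = A i j * B k l.
Proof.
have delta_sum (p : nat) (x : 'I_p) (F : 'I_p -> C) :
    (forall y, y != x -> F y = 0) -> \sum_(y < p) F y = F x.
  by move=> F0; rewrite (bigD1 x) //= big1 ?addr0 // => y /F0.
rewrite /kron summxE (delta_sum _ i) => [|i' ne]; last first.
  rewrite summxE big1 // => j' _; rewrite summxE big1 // => k' _.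
  rewrite summxE big1 // => l' _.
  by rewrite !mxE !mxvec_index_eq eq_sym (negPf ne) mulr0.
rewrite summxE (delta_sum _ j) => [|j' ne]; last first.
  rewrite summxE big1 // => k' _; rewrite summxE big1 // => l' _.
  by rewrite !mxE !mxvec_index_eq [j == _]eq_sym (negPf ne) andbF mulr0.
rewrite summxE (delta_sum _ k) => [|k' ne]; last first.
  rewrite summxE big1 // => l' _.
  by rewrite !mxE !mxvec_index_eq [k == _]eq_sym (negPf ne) andbF mulr0.
rewrite summxE (delta_sum _ l) => [|l' ne]; last first.
  by rewrite !mxE !mxvec_index_eq [l == _]eq_sym (negPf ne) !andbF mulr0.
by rewrite !mxE !mxvec_index_eq !eqxx mulr1.
Qed.

Lemma kron_mul m1 n1 p1 m2 n2 p2 (A : 'M[C]_(m1, n1)) (B : 'M[C]_(m2, n2))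
  (A' : 'M[C]_(n1, p1)) (B' : 'M[C]_(n2, p2)) :
  kron A B *m kron A' B' = kron (A *m A') (B *m B').
Proof.
apply/matrixP => x y; case/mxvec_indexP: x => i k; case/mxvec_indexP: y => j l.
rewrite mxE kronE !mxE sum_mxvec big_distrl /=; apply: eq_bigr => a _.
rewrite big_distrr /=; apply: eq_bigr => b _.
by rewrite !kronE mulrACA.
Qed.

Lemma kron1 m n : kron (1%:M : 'M[C]_m) (1%:M : 'M[C]_n) = 1%:M.
Proof.
apply/matrixP => x y; case/mxvec_indexP: x => i k; case/mxvec_indexP: y => j l.
by rewrite kronE !mxE mxvec_index_eq -natrM mulnb.
Qed.

Lemma kron_suml m1 n1 m2 n2 I (r : seq I) P (F : I -> 'M[C]_(m1, n1))
  (B : 'M[C]_(m2, n2)) :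
  kron (\sum_(i <- r | P i) F i) B = \sum_(i <- r | P i) kron (F i) B.
Proof.
apply/matrixP => x y; case/mxvec_indexP: x => i k; case/mxvec_indexP: y => j l.
rewrite kronE !summxE big_distrl; apply: eq_bigr => a _.
by rewrite kronE.
Qed.

Lemma kron_sumr m1 n1 m2 n2 I (r : seq I) P (A : 'M[C]_(m1, n1))
  (F : I -> 'M[C]_(m2, n2)) :
  kron A (\sum_(i <- r | P i) F i) = \sum_(i <- r | P i) kron A (F i).
Proof.
apply/matrixP => x y; case/mxvec_indexP: x => i k; case/mxvec_indexP: y => j l.
rewrite kronE !summxE big_distrr; apply: eq_bigr => a _.
by rewrite kronE.
Qed.

Lemma hadj_mul m n p (A : 'M[C]_(m, n)) (B : 'M[C]_(n, p)) :
  adj (A *m B) = adj B *m adj A.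
Proof.
apply/matrixP => i j; rewrite /adj !mxE rmorph_sum; apply: eq_bigr => k _.
by rewrite !mxE rmorphM mulrC.
Qed.

Lemma hadjK m n (A : 'M[C]_(m, n)) : adj (adj A) = A.
Proof. by apply/matrixP => i j; rewrite /adj !mxE conjCK. Qed.

Lemma hadjD m n (A B : 'M[C]_(m, n)) : adj (A + B) = adj A + adj B.
Proof. by apply/matrixP => i j; rewrite /adj !mxE rmorphD. Qed.

Lemma hadjZ m n a (A : 'M[C]_(m, n)) : adj (a *: A) = a^* *: adj A.
Proof. by apply/matrixP => i j; rewrite /adj !mxE rmorphM. Qed.

Lemma hadj1 n : adj (1%:M : 'M[C]_n) = 1%:M.
Proof. by apply/matrixP => i j; rewrite /adj !mxE eq_sym rmorph_nat. Qed.

Lemma hadj_kron m1 n1 m2 n2 (A : 'M[C]_(m1, n1)) (B : 'M[C]_(m2, n2)) :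
  adj (kron A B) = kron (adj A) (adj B).
Proof.
apply/matrixP => x y; case/mxvec_indexP: x => i k; case/mxvec_indexP: y => j l.
by rewrite kronE /adj !mxE kronE rmorphM.
Qed.

Lemma hadj_delta n (x : 'I_n) : adj (delta_mx x (0 : 'I_1)) = delta_mx 0 x :> 'M[C]_(1, n).
Proof.
apply/matrixP => i j; rewrite /adj !mxE ord1 eqxx andbT andTb.
by case: (j == x); rewrite ?rmorph1 ?rmorph0.
Qed.

Lemma delta_unit n (j : 'I_n) : adj (delta_mx j (0 : 'I_1)) *m delta_mx j 0 = 1%:M :> 'M[C]_1.
Proof.
by rewrite hadj_delta mul_delta_mx; apply/matrixP => a b; rewrite !ord1 !mxE eqxx.
Qed.

Lemma kron_conj_left m (K A : 'M[C]_m) (B : 'M[C]_m) :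
  adj (kron K 1%:M) *m kron A B *m kron K 1%:M = kron (adj K *m A *m K) B.
Proof. by rewrite hadj_kron hadj1 !kron_mul mul1mx mulmx1. Qed.

Lemma kron_conj_right m (K A : 'M[C]_m) (B : 'M[C]_m) :
  adj (kron 1%:M K) *m kron A B *m kron 1%:M K = kron A (adj K *m B *m K).
Proof. by rewrite hadj_kron hadj1 !kron_mul mul1mx mulmx1. Qed.

End AdjointKronecker.
Section LoccIsSeparable.
Variable C : numClosedFieldType.

Lemma psd1 n : psd (1%:M : 'M[C]_n).
Proof.
split; first exact: hadj1.
move=> v; rewrite mulmx1 mxE; apply: sumr_ge0 => i _.
by rewrite /adj !mxE mulrC mul_conjC_ge0.
Qed.

Lemma psd_congr n (A K : 'M[C]_n) : psd A -> psd (adj K *m A *m K).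
Proof.
case=> hA pA; split; first by rewrite !hadj_mul hadjK hA mulmxA.
by move=> v; have := pA (K *m v); rewrite hadj_mul !mulmxA.
Qed.

(* Separability presented by a list of product terms; unlike [sep_op] this
   form is visibly closed under sums. *)
Definition sep_seq (M : 'M[C]_(2 * 2)) : Prop :=
  exists s : seq ('M[C]_2 * 'M[C]_2),
    (forall p, p \in s -> psd p.1 /\ psd p.2) /\ M = \sum_(p <- s) kron p.1 p.2.

Lemma sep_seq_op M : sep_seq M -> sep_op M.
Proof.
case=> s [Hs ->]; exists (size s), (fun r => (nth (0, 0) s r).1),
  (fun r => (nth (0, 0) s r).2).
split; first by move=> r; apply: Hs; apply: mem_nth.
by rewrite (big_nth (0, 0)) big_mkord.
Qed.

Lemma sep_seq0 : sep_seq 0.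
Proof. by exists [::]; split => //; rewrite big_nil. Qed.

Lemma sep_seq1 : sep_seq 1%:M.
Proof.
exists [:: (1%:M, 1%:M)]; split; last by rewrite big_seq1 kron1.
by move=> p; rewrite inE => /eqP -> /=; split; exact: psd1.
Qed.

Lemma sep_seq_sum m (F : 'I_m -> 'M[C]_(2 * 2)) :
  (forall j, sep_seq (F j)) -> sep_seq (\sum_(j < m) F j).
Proof.
move=> HF; apply: (big_ind sep_seq) => //; first exact: sep_seq0.
move=> _ _ [s [Hs ->]] [t [Ht ->]]; exists (s ++ t); split; last by rewrite big_cat.
by move=> p; rewrite mem_cat => /orP[]; [apply: Hs | apply: Ht].
Qed.

Lemma sep_seq_congr_left M (K : 'M[C]_2) : sep_seq M ->
  sep_seq (adj (kron K 1%:M) *m M *m kron K 1%:M).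
Proof.
case=> s [Hs ->]; exists [seq (adj K *m p.1 *m K, p.2) | p <- s]; split.
  by move=> _ /mapP [q /Hs [h1 h2] ->]; split => //; exact: psd_congr.
rewrite big_map -mulmxA mulmx_suml mulmx_sumr; apply: eq_bigr => p _.
by rewrite mulmxA kron_conj_left.
Qed.

Lemma sep_seq_congr_right M (K : 'M[C]_2) : sep_seq M ->
  sep_seq (adj (kron 1%:M K) *m M *m kron 1%:M K).
Proof.
case=> s [Hs ->]; exists [seq (p.1, adj K *m p.2 *m K) | p <- s]; split.
  by move=> _ /mapP [q /Hs [h1 h2] ->]; split => //; exact: psd_congr.
rewrite big_map -mulmxA mulmx_suml mulmx_sumr; apply: eq_bigr => p _.
by rewrite mulmxA kron_conj_right.
Qed.

Lemma locc_effect_sep k (t : locc_tree C k) i : sep_seq (locc_effect t i).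
Proof.
elim: t => [l | m K nx IH | m K nx IH] /=.
- by case: (l == i); [exact: sep_seq1 | exact: sep_seq0].
- by apply: sep_seq_sum => j; apply: sep_seq_congr_left.
- by apply: sep_seq_sum => j; apply: sep_seq_congr_right.
Qed.

Lemma locc_effect_sum k (t : locc_tree C k) :
  locc_wf t -> \sum_(i < k) locc_effect t i = 1%:M.
Proof.
elim: t => [l | m K nx IH | m K nx IH] /=.
- move=> _; rewrite (bigD1 l) //= eqxx big1 ?addr0 // => i /negPf.
  by rewrite eq_sym => ->.
- case=> hK hnx; rewrite exchange_big /=.
  transitivity (\sum_(j < m) kron (adj (K j) *m K j) (1%:M : 'M[C]_2)).
    apply: eq_bigr => j _; rewrite -mulmx_suml -mulmx_sumr IH // mulmx1.
    by rewrite hadj_kron hadj1 kron_mul mulmx1.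
  by rewrite -kron_suml hK kron1.
- case=> hK hnx; rewrite exchange_big /=.
  transitivity (\sum_(j < m) kron (1%:M : 'M[C]_2) (adj (K j) *m K j)).
    apply: eq_bigr => j _; rewrite -mulmx_suml -mulmx_sumr IH // mulmx1.
    by rewrite hadj_kron hadj1 kron_mul mulmx1.
  by rewrite -kron_sumr hK kron1.
Qed.

Lemma locc_perfect_sep k (rho : 'I_k -> 'M[C]_(2 * 2)) :
  locc_perfect rho -> sep_perfect rho.
Proof.
case=> t [wf H]; exists (locc_effect t); split; first exact: locc_effect_sum.
by split => // i; apply: sep_seq_op; apply: locc_effect_sep.
Qed.

End LoccIsSeparable.
Section PsdQubit.
Variable C : numClosedFieldType.

Lemma ord2P (i : 'I_2) : i = q0 \/ i = q1.
Proof. by case: i => [[|[|n]] Hi]; [left | right | by []]; apply: val_inj. Qed.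

Lemma sum2 (V : nmodType) (F : 'I_2 -> V) : \sum_(i < 2) F i = F q0 + F q1.
Proof. by rewrite big_ord_recl big_ord1; congr (_ + F _); apply: val_inj. Qed.

Definition v2 (x y : C) : 'cV[C]_2 := \col_i (if i == q0 then x else y).

Lemma v2E (x y : C) : (v2 x y q0 0 = x) * (v2 x y q1 0 = y).
Proof. by rewrite !mxE. Qed.

Lemma qform2 (A : 'M[C]_2) x y : (adj (v2 x y) *m A *m v2 x y) 0 0 =
  x^* * A q0 q0 * x + x^* * A q0 q1 * y + y^* * A q1 q0 * x + y^* * A q1 q1 * y.
Proof. by rewrite !mxE !sum2 !mxE !sum2 /adj !mxE /=; ring. Qed.

Lemma psd_herm (A : 'M[C]_2) : psd A -> A q1 q0 = (A q0 q1)^*.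
Proof. by case=> h _; rewrite -{1}h /adj !mxE. Qed.

Lemma psd_diag0 (A : 'M[C]_2) : psd A -> 0 <= A q0 q0.
Proof.
case=> _ /(_ (v2 1 0)); rewrite qform2 conjC1 conjC0.
by rewrite !(mul0r, mulr0, mul1r, mulr1, addr0).
Qed.

Lemma psd_diag1 (A : 'M[C]_2) : psd A -> 0 <= A q1 q1.
Proof.
case=> _ /(_ (v2 0 1)); rewrite qform2 conjC1 conjC0.
by rewrite !(mul0r, mulr0, mul1r, mulr1, add0r).
Qed.

Lemma psd_diag_ge0 (A : 'M[C]_2) i : psd A -> 0 <= A i i.
Proof. by case: (ord2P i) => ->; [exact: psd_diag0 | exact: psd_diag1]. Qed.

Lemma psd_off (A : 'M[C]_2) : psd A -> A q1 q1 = 0 -> A q0 q1 = 0.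
Proof.
move=> pA h11; have h00 := psd_diag0 pA; have hh := psd_herm pA.
set a := A q0 q1 in hh *; set d := A q0 q0 in h00 *.
set k := (d + 1)^-1.
have kp : 0 < k by rewrite invr_gt0 ltr_wpDl.
have kr : k^* = k by apply: conj_Creal; apply: gtr0_real.
have := pA.2 (v2 (- (k * a)) 1).
rewrite qform2 h11 hh !conjCN conjCM kr conjC1 -/a -/d.
have -> : - (k * a^*) * d * - (k * a) + - (k * a^*) * a * 1 + 1 * a^* * - (k * a)
    + 1 * 0 * 1 = - (k * (a * a^*) * (2 - k * d)) by ring.
rewrite oppr_ge0 => H.
have kd : k * d <= 1 by rewrite mulrC ler_pdivrMr ?ltr_wpDl // mul1r lerDl.
have pos : 0 < 2 - k * d by rewrite subr_gt0 (le_lt_trans kd) // ltr1n.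
have : k * (a * a^*) <= 0 by rewrite -(pmulr_rle0 _ pos) mulrC.
rewrite (pmulr_rle0 _ kp) => H2.
have : a * a^* == 0 by rewrite eq_le H2 mul_conjC_ge0.
by rewrite mul_conjC_eq0 => /eqP.
Qed.

Lemma psd_det (A : 'M[C]_2) : psd A -> A q0 q1 * (A q0 q1)^* <= A q0 q0 * A q1 q1.
Proof.
move=> pA; have h11 := psd_diag1 pA; have hh := psd_herm pA.
have [e|nz] := eqVneq (A q1 q1) 0; first by rewrite (psd_off pA e) mul0r e mulr0.
have p11 : 0 < A q1 q1 by rewrite lt_def nz h11.
have := pA.2 (v2 (A q1 q1) (- (A q1 q0))).
rewrite qform2 hh conjCN conjCK (conj_Creal (ger0_real h11)).
set a := A q0 q1; set d := A q0 q0; set e := A q1 q1.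
have -> : e * d * e + e * a * - a^* + - a * a^* * e + - a * e * - a^*
   = e * (d * e - a * a^*) by ring.
by rewrite pmulr_rge0 // subr_ge0.
Qed.

Lemma Re_prod_le (a0 a1 b0 b1 x y : C) : 0 <= a0 -> 0 <= a1 -> 0 <= b0 -> 0 <= b1 ->
  x * x^* <= a0 * a1 -> y * y^* <= b0 * b1 ->
  (x * y) + (x * y)^* <= a0 * b0 + a1 * b1.
Proof.
move=> ha0 ha1 hb0 hb1 hx hy; set z := x * y.
have -> : z + z^* = 2 * 'Re z by rewrite ReE mulrC divfK // pnatr_eq0.
apply: (le_trans (y := 2 * `|z|)).
  by apply: ler_wpM2l; [rewrite ler0n | exact: (leif_Re_Creal z).1].
rewrite -ler_sqr ?nnegrE ?mulr_ge0 ?addr_ge0 ?mulr_ge0 ?ler0n //.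
have nz : `|z| ^+ 2 <= a0 * a1 * (b0 * b1).
  by rewrite normCK /z conjCM mulrACA; apply: ler_pM => //; exact: mul_conjC_ge0.
apply: (le_trans (y := 4 * (a0 * a1 * (b0 * b1)))).
  have four : (2 : C) ^+ 2 = 4 by rewrite expr2 -natrM.
  by rewrite exprMn four; apply: ler_wpM2l; rewrite ?ler0n.
have r : a0 * b0 - a1 * b1 \is Num.real by rewrite realB ?ger0_real ?mulr_ge0.
rewrite -subr_ge0.
have -> : (a0 * b0 + a1 * b1) ^+ 2 - 4 * (a0 * a1 * (b0 * b1))
   = (a0 * b0 - a1 * b1) ^+ 2 by ring.
by rewrite -realEsqr.
Qed.

(* Up to the factor 1/2, the expectation of A (x) B in the Bell state
   (|00> + s|11>)/sqrt 2. *)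
Definition bell_form (s : C) (A B : 'M[C]_2) : C :=
  A q0 q0 * B q0 q0 + A q1 q1 * B q1 q1 + s * (A q0 q1 * B q0 q1 + A q1 q0 * B q1 q0).

Lemma bell_form_ge0 (A B : 'M[C]_2) (s : C) : psd A -> psd B -> (s = 1 \/ s = -1) ->
  0 <= bell_form s A B.
Proof.
move=> pA pB hs; rewrite /bell_form (psd_herm pA) (psd_herm pB).
have bound := Re_prod_le (psd_diag0 pA) (psd_diag1 pA) (psd_diag0 pB) (psd_diag1 pB).
case: hs => ->.
  have dA : (- A q0 q1) * (- A q0 q1)^* <= A q0 q0 * A q1 q1.
    by rewrite conjCN mulrNN psd_det.
  move: (bound _ _ dA (psd_det pB)); rewrite mulNr conjCN conjCM -opprD => H.
  by rewrite mul1r -[X in _ + X]opprK subr_ge0.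
by move: (bound _ _ (psd_det pA) (psd_det pB)); rewrite conjCM mulN1r subr_ge0.
Qed.

Lemma bell_form_corner (A B : 'M[C]_2) (s : C) : psd A -> psd B ->
  A q1 q1 = 0 \/ B q1 q1 = 0 -> bell_form s A B = A q0 q0 * B q0 q0.
Proof.
move=> pA pB [h | h].
  have h01 := psd_off pA h; have h10 := psd_herm pA; rewrite h01 conjC0 in h10.
  by rewrite /bell_form h h01 h10 !(mul0r, addr0, mulr0).
have h01 := psd_off pB h; have h10 := psd_herm pB; rewrite h01 conjC0 in h10.
by rewrite /bell_form h h01 h10 !(mulr0, addr0).
Qed.

End PsdQubit.
Section NoSeparablePovm.
Variable C : numClosedFieldType.

Definition sform n (X : 'M[C]_n) (u w : 'cV[C]_n) : C := (adj u *m X *m w) 0 0.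

Lemma tr_proj n (X : 'M[C]_n) v : \tr (X *m proj v) = sform X v v.
Proof. by rewrite /proj mulmxA mxtrace_mulC mulmxA trace_mx11. Qed.

Lemma sform_ket (X : 'M[C]_(2 * 2)) a b c d :
  sform X (ket C a b) (ket C c d) = X (mxvec_index a b) (mxvec_index c d).
Proof. by rewrite /sform hadj_delta -rowE -colE !mxE. Qed.

Lemma sform_comb n (X : 'M[C]_n) (u w : 'cV[C]_n) a b :
  sform X (a *: u + b *: w) (a *: u + b *: w) =
  a^* * a * sform X u u + a^* * b * sform X u w
  + b^* * a * sform X w u + b^* * b * sform X w w.
Proof.
by rewrite /sform hadjD !hadjZ !mulmxDl !mulmxDr -!scalemxAl -!scalemxAr !mxE; ring.
Qed.

Definition isqrt2 : C := (sqrtC 2)^-1.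

Lemma isqrt2_norm_gt0 : 0 < isqrt2^* * isqrt2.
Proof. by rewrite mulrC mul_conjC_gt0 invr_eq0 sqrtC_eq0 pnatr_eq0. Qed.

Definition bell_mix (g s : C) (x y : 'I_2) : 'M[C]_(2 * 2) :=
  g *: proj (isqrt2 *: (ket C q0 q0 + s *: ket C q1 q1))
  + (1 - g) *: proj (ket C x y).

Lemma sigma1_mix (alpha : C) : sigma1 alpha = bell_mix alpha 1 q0 q1.
Proof. by rewrite /sigma1 /bell_mix /PhiP scale1r. Qed.

Lemma sigma2_mix (beta : C) : sigma2 beta = bell_mix beta (-1) q1 q0.
Proof. by rewrite /sigma2 /bell_mix /PhiM scaleN1r. Qed.

Lemma tr_kron_bell_mix (A B : 'M[C]_2) g s x y : (s = 1 \/ s = -1) ->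
  \tr (kron A B *m bell_mix g s x y) =
  g * (isqrt2^* * isqrt2 * bell_form s A B) + (1 - g) * (A x x * B y y).
Proof.
move=> hs; rewrite /bell_mix mulmxDr -!scalemxAr mxtraceD !mxtraceZ !tr_proj.
rewrite scalerDr scalerA sform_comb !sform_ket !kronE /bell_form conjCM.
by case: hs => ->; rewrite ?conjC1 ?conjCN1; ring.
Qed.

Section ProductTerm.
Variables (g s : C) (x y : 'I_2).
Hypotheses (hg : 0 < g < 1) (hs : s = 1 \/ s = -1) (hxy : x != y).

Lemma tr_kron_bell_mix_ge0 (A B : 'M[C]_2) : psd A -> psd B ->
  0 <= \tr (kron A B *m bell_mix g s x y).
Proof.
case/andP: hg => g0 g1 pA pB; rewrite tr_kron_bell_mix //.
apply: addr_ge0; apply: mulr_ge0.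
- exact: ltW.
- by apply: mulr_ge0; [exact: ltW isqrt2_norm_gt0 | exact: bell_form_ge0].
- by rewrite subr_ge0 ltW.
- by apply: mulr_ge0; apply: psd_diag_ge0.
Qed.

(* A positive product operator annihilating the mixture has no weight on
   |00><00|: the product-state part forces A_xx B_yy = 0, so (x <> y) either
   A00 B00 = 0 directly or a |1><1| corner vanishes, and then the Bell part,
   which must vanish too, reduces to A00 B00. *)
Lemma kron_annihilator_corner (A B : 'M[C]_2) : psd A -> psd B ->
  \tr (kron A B *m bell_mix g s x y) = 0 -> A q0 q0 * B q0 q0 = 0.
Proof.
case/andP: hg => g0 g1 pA pB htr.
have bell_ge0 := bell_form_ge0 pA pB hs.
have c0 := isqrt2_norm_gt0.
have bell_part : 0 <= g * (isqrt2^* * isqrt2 * bell_form s A B).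
  by apply: mulr_ge0; [exact: ltW | apply: mulr_ge0; [exact: ltW |]].
have prod_part : 0 <= (1 - g) * (A x x * B y y).
  by apply: mulr_ge0; [rewrite subr_ge0 ltW | apply: mulr_ge0; apply: psd_diag_ge0].
move: htr; rewrite tr_kron_bell_mix // => /eqP; rewrite paddr_eq0 //.
case/andP; rewrite mulf_eq0 (gt_eqF g0) mulf_eq0 (gt_eqF c0) /= => /eqP bell0.
rewrite mulf_eq0 subr_eq0 eq_sym (lt_eqF g1) mulf_eq0 /= => /orP[] /eqP hxy0;
  case: (ord2P x) hxy hxy0 => ->; case: (ord2P y) => -> //= _ hxy0.
- by rewrite hxy0 mul0r.
- by rewrite -(bell_form_corner s pA pB (or_introl hxy0)) bell0.
- by rewrite -(bell_form_corner s pA pB (or_intror hxy0)) bell0.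
- by rewrite hxy0 mulr0.
Qed.

Lemma sep_annihilator_corner (M : 'M[C]_(2 * 2)) : sep_op M ->
  \tr (M *m bell_mix g s x y) = 0 -> M (mxvec_index q0 q0) (mxvec_index q0 q0) = 0.
Proof.
case=> [N [A [B [hp ->]]]]; rewrite mulmx_suml raddf_sum => htr.
have ge0 r : 0 <= \tr (kron (A r) (B r) *m bell_mix g s x y).
  by case: (hp r) => pA pB; exact: tr_kron_bell_mix_ge0.
rewrite summxE; apply: big1 => r _; rewrite kronE.
case: (hp r) => pA pB; apply: kron_annihilator_corner => //.
exact: (psumr_eq0P (fun r _ => ge0 r) htr).
Qed.

End ProductTerm.

(* No separable POVM distinguishes sigma1 and sigma2 perfectly: both
   elements would have to vanish on |00><00|, yet they sum to the identity. *)
Lemma sigma_not_sep_perfect (alpha beta : C) : 0 < alpha < 1 -> 0 < beta < 1 ->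
  ~ sep_perfect (pair2 (sigma1 alpha) (sigma2 beta)).
Proof.
move=> ha hb [Pi [hsum [hsep htr]]].
have h0 : Pi q0 (mxvec_index q0 q0) (mxvec_index q0 q0) = 0.
  apply: (sep_annihilator_corner hb (s := -1) (x := q1) (y := q0)) => //; first by right.
  by rewrite -sigma2_mix; exact: (htr q0 q1).
have h1 : Pi q1 (mxvec_index q0 q0) (mxvec_index q0 q0) = 0.
  apply: (sep_annihilator_corner ha (s := 1) (x := q0) (y := q1)) => //; first by left.
  by rewrite -sigma1_mix; exact: (htr q1 q0).
have := congr1 (fun M : 'M[C]_(2 * 2) => M (mxvec_index q0 q0) (mxvec_index q0 q0)) hsum.
by rewrite /= summxE sum2 h0 h1 addr0 mxE eqxx => /eqP; rewrite eq_sym oner_eq0.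
Qed.

End NoSeparablePovm.
Section TwoRoundProtocol.
Variable C : numClosedFieldType.

(* Alice measures in the basis (w j)_j and announces j; Bob then measures in
   the basis (u j l)_l and the protocol guesses l. *)
Definition two_round (w : 'I_2 -> 'cV[C]_2) (u : 'I_2 -> 'I_2 -> 'cV[C]_2) :
    locc_tree C 2 :=
  LAlice (fun j => delta_mx j (0 : 'I_1) *m adj (w j))
    (fun j => LBob (fun l => delta_mx l (0 : 'I_1) *m adj (u j l)) (fun l => LLeaf C l)).

Lemma basis_kraus n (j : 'I_n) (v : 'cV[C]_n) :
  adj (delta_mx j (0 : 'I_1) *m adj v) *m (delta_mx j 0 *m adj v) = v *m adj v.
Proof. by rewrite hadj_mul hadjK -mulmxA (mulmxA (adj _)) delta_unit mul1mx. Qed.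

Lemma two_round_wf w u : \sum_j w j *m adj (w j) = 1%:M ->
  (forall j, \sum_l u j l *m adj (u j l) = 1%:M) -> locc_wf (two_round w u).
Proof.
move=> hw hu /=; split.
  by rewrite -hw; apply: eq_bigr => j _; rewrite basis_kraus.
by move=> j; split => //; rewrite -(hu j); apply: eq_bigr => l _; rewrite basis_kraus.
Qed.

Lemma two_round_effect w u i :
  locc_effect (two_round w u) i =
  \sum_j kron (w j) (u j i) *m adj (kron (w j) (u j i)).
Proof.
rewrite /=; apply: eq_bigr => j _.
rewrite (bigD1 i) //= eqxx big1 ?addr0; last first.
  by move=> l /negPf; rewrite eq_sym => ->; rewrite mulmx0 mul0mx.
rewrite mulmx1 !hadj_kron !hadj1 !mulmxA !kron_mul !mul1mx !mulmx1 !hadj_mul !hadjK.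
by rewrite !mulmxA -!(mulmxA _ (adj (delta_mx _ _))) !delta_unit !mulmx1.
Qed.

Lemma perfect_of_offdiag k n (E rho : 'I_k -> 'M[C]_n) :
  \sum_i E i = 1%:M -> (forall j, \tr (rho j) = 1) ->
  (forall i j, i != j -> \tr (E i *m rho j) = 0) ->
  forall i j, \tr (E i *m rho j) = (i == j)%:R.
Proof.
move=> hsum htr off i j; have [<-|ne] := eqVneq i j; last by rewrite off.
have := congr1 (fun M => \tr (M *m rho i)) hsum.
rewrite (bigD1 i) //= mulmxDl mxtraceD mulmx_suml raddf_sum /= mul1mx htr.
by rewrite big1 ?addr0 => [|l ne]; [|exact: off].
Qed.

Lemma tr_proj_unit n (v : 'cV[C]_n) : unit_vec v -> \tr (proj v) = 1.
Proof. by rewrite -[proj v]mul1mx tr_proj /sform mulmx1. Qed.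

Lemma locc_perfect_two_round (rho : 'I_2 -> 'M[C]_(2 * 2)) (psi : 'I_2 -> 'cV[C]_(2 * 2))
  (w : 'I_2 -> 'cV[C]_2) (u : 'I_2 -> 'I_2 -> 'cV[C]_2) :
  (forall k, rho k = proj (psi k)) -> (forall k, unit_vec (psi k)) ->
  \sum_j w j *m adj (w j) = 1%:M ->
  (forall j, \sum_l u j l *m adj (u j l) = 1%:M) ->
  (forall j i k, i != k -> adj (kron (w j) (u j i)) *m psi k = 0) ->
  locc_perfect rho.
Proof.
move=> hrho hunit hw hu horth.
have wf := two_round_wf hw hu.
exists (two_round w u); split => //.
have tr1 k : \tr (rho k) = 1 by rewrite hrho tr_proj_unit.
apply: perfect_of_offdiag (locc_effect_sum wf) tr1 _.
move=> i k ne; rewrite hrho tr_proj two_round_effect /sform mulmx_sumr mulmx_suml summxE.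
by apply: big1 => j _; rewrite !mulmxA -mulmxA (horth j i k ne) mulmx0 mxE.
Qed.

End TwoRoundProtocol.
Section QubitGeometry.
Variable C : numClosedFieldType.

Definition dot2 (x y : 'cV[C]_2) : C := \sum_b (x b 0)^* * y b 0.
Definition sqnorm2 (z : 'cV[C]_2) : C := dot2 z z.
Definition normalize (z : 'cV[C]_2) : 'cV[C]_2 := (sqrtC (sqnorm2 z))^-1 *: z.
Definition perp (z : 'cV[C]_2) : 'cV[C]_2 := v2 (- (z q1 0)^*) ((z q0 0)^*).

Lemma v2_eta (z : 'cV[C]_2) : z = v2 (z q0 0) (z q1 0).
Proof. by apply/matrixP => i j; rewrite !ord1 mxE; case: (ord2P i) => ->. Qed.

Lemma v2_neq0 (x y : C) : x != 0 -> v2 x y != 0.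
Proof. by apply: contra => /eqP /(congr1 (fun m : 'cV[C]_2 => m q0 0)); rewrite v2E mxE => ->. Qed.

Lemma dot2E x y : dot2 x y = (x q0 0)^* * y q0 0 + (x q1 0)^* * y q1 0.
Proof. by rewrite /dot2 sum2. Qed.

Lemma dot2Zl (c : C) x y : dot2 (c *: x) y = c^* * dot2 x y.
Proof. by rewrite !dot2E !mxE !conjCM; ring. Qed.

Lemma dot2_perp x : dot2 (perp x) x = 0.
Proof. by rewrite dot2E !mxE /= conjCN !conjCK; ring. Qed.

Lemma dot2_0 x : dot2 x 0 = 0.
Proof. by rewrite dot2E !mxE !mulr0 addr0. Qed.

Lemma perpZ (c : C) x : perp (c *: x) = c^* *: perp x.
Proof.
by apply/matrixP => i j; rewrite !ord1 !mxE; case: (ord2P i) => -> /=; rewrite conjCM ?mulrN.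
Qed.

Lemma perp_eq0 z : perp z = 0 -> z = 0.
Proof.
move=> h; have h0 := congr1 (fun m : 'cV[C]_2 => m q0 0) h.
have h1 := congr1 (fun m : 'cV[C]_2 => m q1 0) h.
move: h0 h1; rewrite /= !mxE /= => /eqP; rewrite oppr_eq0 conjC_eq0 => /eqP h0 /eqP.
rewrite conjC_eq0 => /eqP h1.
by rewrite (v2_eta z) h0 h1; apply/matrixP => i j; rewrite !mxE; case: (_ == _).
Qed.

Lemma sqnorm2_ge0 z : 0 <= sqnorm2 z.
Proof. by rewrite /sqnorm2 dot2E addr_ge0 // mulrC mul_conjC_ge0. Qed.

Lemma sqnorm2_eq0 z : sqnorm2 z = 0 -> z = 0.
Proof.
rewrite /sqnorm2 dot2E => /eqP; rewrite paddr_eq0 ?(mulrC (_^*)) ?mul_conjC_ge0 //.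
rewrite !mul_conjC_eq0 => /andP[/eqP h0 /eqP h1].
by rewrite (v2_eta z) h0 h1; apply/matrixP => i j; rewrite !mxE; case: (_ == _).
Qed.

Lemma sqnorm2_normalize z : z != 0 -> sqnorm2 (normalize z) = 1.
Proof.
move=> nz; have n0 : sqnorm2 z != 0 by apply: contra nz => /eqP /sqnorm2_eq0 ->.
rewrite /sqnorm2 /normalize dot2Zl [dot2 _ _]dot2E !mxE.
have r : (sqrtC (sqnorm2 z))^-1 \is Num.real by rewrite realV sqrtC_real ?sqnorm2_ge0.
rewrite (conj_Creal r).
set k := (sqrtC (sqnorm2 z))^-1.
have -> : k * ((z q0 0)^* * (k * z q0 0) + (z q1 0)^* * (k * z q1 0)) = k ^+ 2 * sqnorm2 z.
  by rewrite /sqnorm2 dot2E; ring.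
by rewrite /k exprVn sqrtCK mulVf.
Qed.

Lemma perp_basis y : sqnorm2 y = 1 -> y *m adj y + perp y *m adj (perp y) = 1%:M.
Proof.
rewrite /sqnorm2 dot2E => h.
have e0 : (ord0 : 'I_1) = 0 by apply: val_inj.
apply/matrixP => i j; rewrite !mxE !big_ord1 /adj !mxE e0.
case: (ord2P i) => ->; case: (ord2P j) => -> /=; rewrite ?mxE /= ?conjCN ?conjCK ?e0.
- by rewrite -h; ring.
- ring.
- ring.
- by rewrite -h; ring.
Qed.

Lemma separating_basis (v1 v2' : 'cV[C]_2) : dot2 v1 v2' = 0 ->
  exists u0 u1 : 'cV[C]_2, u0 *m adj u0 + u1 *m adj u1 = 1%:M /\
    dot2 u1 v1 = 0 /\ dot2 u0 v2' = 0.
Proof.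
move=> h.
pose z0 := if v1 == 0 then perp v2' else v1.
pose z := if z0 == 0 then v2 1 0 else z0.
have nz : z != 0.
  by rewrite /z; have [_|n0] := eqVneq z0 0; [apply: v2_neq0; rewrite oner_eq0 | exact: n0].
exists (normalize z), (perp (normalize z)).
split; first by apply: perp_basis; apply: sqnorm2_normalize.
rewrite /normalize perpZ !dot2Zl; split.
  have [->|n1] := eqVneq v1 0; first by rewrite dot2_0 mulr0.
  by rewrite /z /z0 (negbTE n1) (negbTE n1) dot2_perp mulr0.
have [e1|n1] := eqVneq v1 0; last by rewrite /z /z0 (negbTE n1) (negbTE n1) h mulr0.
rewrite /z /z0 e1 eqxx; case: eqP => [/perp_eq0 ->|_]; first by rewrite dot2_0 mulr0.
by rewrite dot2_perp mulr0.
Qed.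

End QubitGeometry.
Section AliceStep.
Variable C : numClosedFieldType.

(* The traceless triangular form w |-> <w| [[p, q], [0, -p]] |w>, written in
   coordinates with w conjugated on the right. *)
Definition tri_form (p q : C) (w : 'cV[C]_2) : C :=
  p * (w q0 0 * (w q0 0)^* - w q1 0 * (w q1 0)^*) + w q0 0 * (w q1 0)^* * q.

Lemma tri_formZ (p q k : C) w : tri_form p q (k *: w) = k * k^* * tri_form p q w.
Proof. by rewrite /tri_form !mxE !conjCM; ring. Qed.

(* Being traceless, the form changes sign on the perpendicular vector. *)
Lemma tri_form_perp (p q : C) w : tri_form p q (perp w) = - tri_form p q w.
Proof. by rewrite /tri_form /perp !v2E !conjCN !conjCK; ring. Qed.

(* Every traceless triangular form has an isotropic unit vector: generically
   (2|p|^2 q^*, p^*(|q|^2 + S)) with S = sqrt(|q|^4 + 4|p|^2|q|^2), and the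
   degenerate cases p = 0 or q = 0 are handled by hand. *)
Lemma tri_form_isotropic (p q : C) :
  exists w : 'cV[C]_2, sqnorm2 w = 1 /\ tri_form p q w = 0.
Proof.
have hP : 0 <= p * p^* := mul_conjC_ge0 p.
have hQ : 0 <= q * q^* := mul_conjC_ge0 q.
set S := sqrtC ((q * q^*) ^+ 2 + 4 * (p * p^*) * (q * q^*)).
have hS2 : S ^+ 2 = (q * q^*) ^+ 2 + 4 * (p * p^*) * (q * q^*).
  by rewrite sqrtCK.
have hS : 0 <= S.
  rewrite sqrtC_ge0; apply: addr_ge0; first exact: exprn_ge0.
  by apply: mulr_ge0 => //; apply: mulr_ge0 => //; apply: ler0n.
have hT : (q * q^* + S)^* = q * q^* + S by apply/conj_Creal/ger0_real/addr_ge0.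
have c2 : (2 : C)^* = 2 := conjC_nat _ 2.
pose zc := v2 (2 * (p * p^*) * q^*) (p^* * (q * q^* + S)).
have fz : tri_form p q zc = 0.
  have e1 : (2 * (p * p^*) * q^*)^* = 2 * (p * p^*) * q by rewrite !conjCM !conjCK c2; ring.
  have e2 : (p^* * (q * q^* + S))^* = p * (q * q^* + S) by rewrite conjCM conjCK hT.
  rewrite /tri_form /zc !v2E e1 e2.
  have -> : p * (2 * (p * p^*) * q^* * (2 * (p * p^*) * q) -
     p^* * (q * q^* + S) * (p * (q * q^* + S))) +
     2 * (p * p^*) * q^* * (p * (q * q^* + S)) * q
     = p * (p * p^*) * (4 * (p * p^*) * (q * q^*) + (q * q^*) ^+ 2 - S ^+ 2) by ring.
  by rewrite hS2; ring.
have [zc0|nz] := eqVneq zc 0; last first.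
  exists (normalize zc); split; first exact: sqnorm2_normalize.
  by rewrite /normalize tri_formZ fz mulr0.
have [p0|pn] := eqVneq p 0.
  exists (v2 1 0); split; first by rewrite /sqnorm2 dot2E !v2E conjC1 conjC0; ring.
  by rewrite /tri_form !v2E p0; ring.
have q0' : q = 0.
  move: (congr1 (fun m : 'cV[C]_2 => m q0 0) zc0); rewrite /zc v2E mxE /= => /eqP.
  by rewrite !mulf_eq0 pnatr_eq0 /= !conjC_eq0 (negbTE pn) /= => /eqP.
exists (normalize (v2 1 1)); split.
  by apply: sqnorm2_normalize; apply: v2_neq0; rewrite oner_eq0.
by rewrite /normalize tri_formZ /tri_form !v2E q0' conjC1; ring.
Qed.

End AliceStep.

Section PureStates.
Variable C : numClosedFieldType.

(* Bob's unnormalized conditional state when Alice projects psi onto w. *)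
Definition bob_state (w : 'cV[C]_2) (psi : 'cV[C]_(2 * 2)) : 'cV[C]_2 :=
  \col_b \sum_a (w a 0)^* * psi (mxvec_index a b) 0.

Lemma kron_orth (w u : 'cV[C]_2) (psi : 'cV[C]_(2 * 2)) :
  dot2 u (bob_state w psi) = 0 -> adj (kron w u) *m psi = 0.
Proof.
move=> H; apply/matrixP => x y; rewrite (ord1 y); case/mxvec_indexP: x => i k.
rewrite [RHS]mxE mxE sum_mxvec -[RHS]H /dot2 exchange_big; apply: eq_bigr => b _.
rewrite mxE big_distrr; apply: eq_bigr => a _.
by rewrite /adj !mxE kronE conjCM !ord1 /= mulrCA mulrA.
Qed.

Variables a b c d : C.
Let psi1 := a *: PhiP C + b *: ket C q0 q1.
Let psi2 := c *: PhiM C + d *: ket C q1 q0.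

Lemma bob_overlap (w : 'cV[C]_2) :
  dot2 (bob_state w psi1) (bob_state w psi2) =
  tri_form ((a * isqrt2 C)^* * (c * isqrt2 C))
           ((a * isqrt2 C)^* * d - b^* * (c * isqrt2 C)) w.
Proof.
have bob1 : bob_state w psi1 = v2 ((w q0 0)^* * (a * isqrt2 C))
    ((w q0 0)^* * b + (w q1 0)^* * (a * isqrt2 C)).
  apply/matrixP => i j; rewrite (ord1 j); case: (ord2P i) => ->;
  by rewrite !mxE sum2 /psi1 /PhiP /ket -/(isqrt2 C) !mxE !mxvec_index_eq /=; ring.
have bob2 : bob_state w psi2 = v2 ((w q0 0)^* * (c * isqrt2 C) + (w q1 0)^* * d)
    (- (w q1 0)^* * (c * isqrt2 C)).
  apply/matrixP => i j; rewrite (ord1 j); case: (ord2P i) => ->;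
  by rewrite !mxE sum2 /psi2 /PhiM /ket -/(isqrt2 C) !mxE !mxvec_index_eq /=; ring.
by rewrite bob1 bob2 dot2E !v2E /tri_form !(conjCD, conjCN, conjCM, conjCK); ring.
Qed.

End PureStates.
(* Any two unit vectors of s1 and s2 are distinguished by the two-round
   protocol: Alice measures in a basis (w, perp w) of isotropic vectors of the
   overlap form, after which Bob's two conditional states are orthogonal. *)
Lemma pure_locc_perfect (C : numClosedFieldType) (phi1 phi2 : 'cV[C]_(2 * 2)) :
  in_span2 (PhiP C) (ket C q0 q1) phi1 ->
  in_span2 (PhiM C) (ket C q1 q0) phi2 ->
  unit_vec phi1 -> unit_vec phi2 ->
  locc_perfect (pair2 (proj phi1) (proj phi2)).
Proof.
move=> [a [b ->]] [c [d ->]] un1 un2.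
set p := (a * isqrt2 C)^* * (c * isqrt2 C).
set q := (a * isqrt2 C)^* * d - b^* * (c * isqrt2 C).
have [w0 [n0 f0]] := tri_form_isotropic p q.
have f1 : tri_form p q (perp w0) = 0 by rewrite tri_form_perp f0 oppr0.
have [u00 [u01 [hu0 [o01 o00]]]] := separating_basis (etrans (bob_overlap a b c d w0) f0).
have [u10 [u11 [hu1 [o11 o10]]]] :=
  separating_basis (etrans (bob_overlap a b c d (perp w0)) f1).
apply: (locc_perfect_two_round (psi := pair2 (a *: PhiP C + b *: ket C q0 q1)
    (c *: PhiM C + d *: ket C q1 q0)) (w := pair2 w0 (perp w0))
  (u := fun j => if j == q0 then pair2 u00 u01 else pair2 u10 u11)).
- by move=> k; case: (ord2P k) => ->.
- by move=> k; case: (ord2P k) => ->.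
- by rewrite sum2 /=; apply: perp_basis.
- by move=> j; rewrite sum2; case: (ord2P j) => -> /=.
- move=> j i k; case: (ord2P j) => ->; case: (ord2P i) => ->; case: (ord2P k) => -> //= _;
  exact: kron_orth.
Qed.

Theorem mainTheorem5 (C : numClosedFieldType) (alpha beta : C)
  (halpha : 0 < alpha < 1) (hbeta : 0 < beta < 1) :
  (forall psi1 psi2 : 'cV[C]_(2 * 2),
      in_span2 (PhiP C) (ket C q0 q1) psi1 ->
      in_span2 (PhiM C) (ket C q1 q0) psi2 ->
      unit_vec psi1 -> unit_vec psi2 ->
      locc_perfect (pair2 (proj psi1) (proj psi2)))
  /\ ~ locc_perfect (pair2 (sigma1 alpha) (sigma2 beta))
  /\ ~ sep_perfect (pair2 (sigma1 alpha) (sigma2 beta)).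
Proof.
have not_sep := sigma_not_sep_perfect halpha hbeta.
split; first exact: pure_locc_perfect.
by split => // /locc_perfect_sep.
Qed.
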